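(* In the While-language extended with non-deterministic input, for every command $c$ and stores $\sigma,\sigma'$: if $(c,\sigma)\to^\infty$ then $(c,\sigma,\Downarrow)\Rightarrow^{co}_G\sigma',\Uparrow$.
   Context: Extended While-language syntax: variables $x$ range over a countably infinite set $\mathit{Var}$; $n$ ranges over natural numbers; values are $v ::= \mathsf{null}\mid n$ ($\mathsf{null}$ distinct from every natural number); expressions are $e ::= v\mid x\mid e_1\oplus e_2\mid\mathsf{input}$ with $\oplus\in\{+,-,*\}$, where $\oplus(n_1,n_2)$ is the result of the operation on naturals; commands are $c ::= \mathsf{skip}\mid\mathsf{alloc}\ x\mid x:=e\mid c_1;c_2\mid \mathsf{if}\ e\ c_1\ c_2\mid\mathsf{while}\ e\ c$. A store $\sigma$ is a finite partial map from $\mathit{Var}$ to values, with domain $\mathrm{dom}(\sigma)$, lookup $\sigma(x)$, update $\sigma[x\mapsto v]$. Expression evaluation $(e,\sigma)\Rightarrow_E v$ is the least relation with: $(v,\sigma)\Rightarrow_E v$; $(x,\sigma)\Rightarrow_E\sigma(x)$ if $x\in\mathrm{dom}(\sigma)$; if $(e_1,\sigma)\Rightarrow_E n_1$ and $(e_2,\sigma)\Rightarrow_E n_2$ with $n_1,n_2$ naturals then $(e_1\oplus e_2,\sigma)\Rightarrow_E\oplus(n_1,n_2)$; and $(\mathsf{input},\sigma)\Rightarrow_E v$ for every value $v$. Small-step relation $(c,\sigma)\to(c',\sigma')$ is the least relation with: $(\mathsf{alloc}\ x,\sigma)\to(\mathsf{skip},\sigma[x\mapsto\mathsf{null}])$ if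 $x\notin\mathrm{dom}(\sigma)$; $(x:=e,\sigma)\to(\mathsf{skip},\sigma[x\mapsto v])$ if $x\in\mathrm{dom}(\sigma)$ and $(e,\sigma)\Rightarrow_E v$; $(c_1;c_2,\sigma)\to(c_1';c_2,\sigma')$ if $(c_1,\sigma)\to(c_1',\sigma')$; $(\mathsf{skip};c_2,\sigma)\to(c_2,\sigma)$; $(\mathsf{if}\ e\ c_1\ c_2,\sigma)\to(c_1,\sigma)$ if $(e,\sigma)\Rightarrow_E v$, $v\neq 0$; $(\mathsf{if}\ e\ c_1\ c_2,\sigma)\to(c_2,\sigma)$ if $(e,\sigma)\Rightarrow_E 0$; $(\mathsf{while}\ e\ c,\sigma)\to(c;\mathsf{while}\ e\ c,\sigma)$ if $(e,\sigma)\Rightarrow_E v$, $v\neq0$; $(\mathsf{while}\ e\ c,\sigma)\to(\mathsf{skip},\sigma)$ if $(e,\sigma)\Rightarrow_E 0$. The predicate $(c,\sigma)\to^\infty$ is coinductively defined (greatest predicate) by: if $(c,\sigma)\to(c',\sigma')$ and $(c',\sigma')\to^\infty$ then $(c,\sigma)\to^\infty$. Flag-based big-step semantics: status flags $\delta ::= \Downarrow\mid\Uparrow$. Expression evaluation $(e,\sigma,\delta)\Rightarrow_{GE}v,\delta'$ is the least relation with: $(v,\sigma,\Downarrow)\Rightarrow_{GE}v,\Downarrow$; $(x,\sigma,\Downarrow)\Rightarrow_{GE}\sigma(x),\Downarrow$ if $x\in\mathrm{dom}(\sigma)$; if $(e_1,\sigma,\Downarrow)\Rightarrow_{GE}n_1,\delta$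 and $(e_2,\sigma,\delta)\Rightarrow_{GE}n_2,\delta'$ ($n_1,n_2$ naturals) then $(e_1\oplus e_2,\sigma,\Downarrow)\Rightarrow_{GE}\oplus(n_1,n_2),\delta'$; $(\mathsf{input},\sigma,\Downarrow)\Rightarrow_{GE}v,\Downarrow$ for every value $v$; and $(e,\sigma,\Uparrow)\Rightarrow_{GE}v,\Uparrow$ for every value $v$. The command rules for judgments $(c,\sigma,\delta)\Rightarrow_G\sigma',\delta'$ are: $(\mathsf{skip},\sigma,\Downarrow)\Rightarrow_G\sigma,\Downarrow$; $(\mathsf{alloc}\ x,\sigma,\Downarrow)\Rightarrow_G\sigma[x\mapsto\mathsf{null}],\Downarrow$ if $x\notin\mathrm{dom}(\sigma)$; $(x:=e,\sigma,\Downarrow)\Rightarrow_G\sigma[x\mapsto v],\delta$ if $x\in\mathrm{dom}(\sigma)$ and $(e,\sigma,\Downarrow)\Rightarrow_{GE}v,\delta$; $(c_1;c_2,\sigma,\Downarrow)\Rightarrow_G\sigma'',\delta'$ if $(c_1,\sigma,\Downarrow)\Rightarrow_G\sigma',\delta$ and $(c_2,\sigma',\delta)\Rightarrow_G\sigma'',\delta'$; $(\mathsf{if}\ e\ c_1\ c_2,\sigma,\Downarrow)\Rightarrow_G\sigma',\delta'$ if $v\ne0$, $(e,\sigma,\Downarrow)\Rightarrow_{GE}v,\delta$ and $(c_1,\sigma,\delta)\Rightarrow_G\sigma',\delta'$; $(\mathsf{if}\ e\ c_1\ c_2,\sigma,\Downarrow)\Rightarrow_G\sigma',\delta'$ if $(e,\sigma,\Downarrow)\Rightarrow_{GE}0,\delta$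 and $(c_2,\sigma,\delta)\Rightarrow_G\sigma',\delta'$; $(\mathsf{while}\ e\ c,\sigma,\Downarrow)\Rightarrow_G\sigma'',\delta''$ if $(e,\sigma,\Downarrow)\Rightarrow_{GE}v,\delta$, $v\ne0$, $(c,\sigma,\delta)\Rightarrow_G\sigma',\delta'$ and $(\mathsf{while}\ e\ c,\sigma',\delta')\Rightarrow_G\sigma'',\delta''$; $(\mathsf{while}\ e\ c,\sigma,\Downarrow)\Rightarrow_G\sigma,\delta$ if $(e,\sigma,\Downarrow)\Rightarrow_{GE}0,\delta$; $(c,\sigma,\Uparrow)\Rightarrow_G\sigma',\Uparrow$ for every store $\sigma'$. $\Rightarrow^{co}_G$ is the coinductive interpretation of these command rules (greatest relation such that every element is the conclusion of a rule instance whose command premises lie in it). *)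

From mathcomp Require Import all_boot.
From mathcomp Require Import finmap.
Set Implicit Arguments. Unset Strict Implicit. Unset Printing Implicit Defensive.
Local Open Scope fmap_scope.

Definition Var := nat.

Inductive value : Type := VNull | VNat of nat.

Inductive op : Type := OPlus | OMinus | OMult.

(* result of the operation on naturals (truncated subtraction) *)
Definition op_sem (o : op) (n1 n2 : nat) : nat :=
  match o with OPlus => n1 + n2 | OMinus => n1 - n2 | OMult => n1 * n2 end.

Inductive expr : Type :=
| EVal of value
| EVar of Var
| EOp of op & expr & expr
| EInput.

Inductive cmd : Type :=
| Skip
| Alloc of Var
| Assign of Var & expr
| Seq of cmd & cmd
| If of expr & cmd & cmd
| While of expr & cmd.

Definition store := {fmap Var -> value}.

Definition upd (s : store) (x : Var) (v : value) : store := s.[x <- v].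

Inductive evalE : expr -> store -> value -> Prop :=
| E_Val v s : evalE (EVal v) s v
| E_Var x s (Hx : x \in domf s) : evalE (EVar x) s (s.[Hx])
| E_Op o e1 e2 s n1 n2 :
    evalE e1 s (VNat n1) -> evalE e2 s (VNat n2) ->
    evalE (EOp o e1 e2) s (VNat (op_sem o n1 n2))
| E_Input s v : evalE EInput s v.

Inductive step : cmd -> store -> cmd -> store -> Prop :=
| S_Alloc x s : x \notin domf s -> step (Alloc x) s Skip (upd s x VNull)
| S_Assign x e s v : x \in domf s -> evalE e s v -> step (Assign x e) s Skip (upd s x v)
| S_Seq c1 c1' c2 s s' : step c1 s c1' s' -> step (Seq c1 c2) s (Seq c1' c2) s'
| S_SeqSkip c2 s : step (Seq Skip c2) s c2 s
| S_IfT e c1 c2 s v : evalE e s v -> v <> VNat 0 -> step (If e c1 c2) s c1 s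
| S_IfF e c1 c2 s : evalE e s (VNat 0) -> step (If e c1 c2) s c2 s
| S_WhileT e c s v : evalE e s v -> v <> VNat 0 -> step (While e c) s (Seq c (While e c)) s
| S_WhileF e c s : evalE e s (VNat 0) -> step (While e c) s Skip s.

CoInductive diverges : cmd -> store -> Prop :=
| Div c s c' s' : step c s c' s' -> diverges c' s' -> diverges c s.

(* Status flags: Conv = ⇓, Div = ⇑ *)
Inductive flag : Type := Conv | DivF.

Inductive evalGE : expr -> store -> flag -> value -> flag -> Prop :=
| GE_Val v s : evalGE (EVal v) s Conv v Conv
| GE_Var x s (Hx : x \in domf s) : evalGE (EVar x) s Conv (s.[Hx]) Conv
| GE_Op o e1 e2 s n1 n2 d d' :
    evalGE e1 s Conv (VNat n1) d -> evalGE e2 s d (VNat n2) d' ->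
    evalGE (EOp o e1 e2) s Conv (VNat (op_sem o n1 n2)) d'
| GE_Input s v : evalGE EInput s Conv v Conv
| GE_Div e s v : evalGE e s DivF v DivF.

CoInductive evalGco : cmd -> store -> flag -> store -> flag -> Prop :=
| G_Skip s : evalGco Skip s Conv s Conv
| G_Alloc x s : x \notin domf s -> evalGco (Alloc x) s Conv (upd s x VNull) Conv
| G_Assign x e s v d : x \in domf s -> evalGE e s Conv v d ->
    evalGco (Assign x e) s Conv (upd s x v) d
| G_Seq c1 c2 s s' s'' d d' : evalGco c1 s Conv s' d -> evalGco c2 s' d s'' d' ->
    evalGco (Seq c1 c2) s Conv s'' d'
| G_IfT e c1 c2 s s' v d d' : v <> VNat 0 -> evalGE e s Conv v d ->
    evalGco c1 s d s' d' -> evalGco (If e c1 c2) s Conv s' d'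
| G_IfF e c1 c2 s s' d d' : evalGE e s Conv (VNat 0) d ->
    evalGco c2 s d s' d' -> evalGco (If e c1 c2) s Conv s' d'
| G_WhileT e c s s' s'' v d d' d'' : evalGE e s Conv v d -> v <> VNat 0 ->
    evalGco c s d s' d' -> evalGco (While e c) s' d' s'' d'' ->
    evalGco (While e c) s Conv s'' d''
| G_WhileF e c s d : evalGE e s Conv (VNat 0) d -> evalGco (While e c) s Conv s d
| G_Div c s s' : evalGco c s DivF s' DivF.

(* Coinduction on the divergent run. Atomic commands cannot diverge, and a
   diverging [if] or [while] diverges in the branch or body it selects. The only
   real case is [c1; c2]: either the run of [c1] never reaches [Skip], and then
   [c1] itself diverges (by excluded middle and a second coinduction), or it does
   after finitely many steps, which give a terminating big-step derivation of
   [c1], and [c2] diverges from the resulting store. *)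
From mathcomp Require Import all_boot.
From mathcomp Require Import finmap.
From Stdlib Require Import Classical.

Inductive steps : cmd -> store -> cmd -> store -> Prop :=
| steps_refl c s : steps c s c s
| steps_step c s c1 s1 c2 s2 :
    step c s c1 s1 -> steps c1 s1 c2 s2 -> steps c s c2 s2.

Lemma evalE_evalGE {e s v} : evalE e s v -> evalGE e s Conv v Conv.
Proof. induction 1; econstructor; eauto. Qed.

Lemma step_evalGco c s c' s' t d :
  step c s c' s' -> evalGco c' s' Conv t d -> evalGco c s Conv t d.
Proof.
  intros Hstep; revert t d; induction Hstep; intros t d Hg.
  - inversion Hg; subst. constructor; auto.
  - inversion Hg; subst. econstructor; eauto using evalE_evalGE.
  - inversion Hg; subst. econstructor; eauto.
  - econstructor; [constructor | exact Hg].
  - eapply G_IfT; eauto using evalE_evalGE.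
  - eapply G_IfF; eauto using evalE_evalGE.
  - inversion Hg; subst. eapply G_WhileT; eauto using evalE_evalGE.
  - inversion Hg; subst. eapply G_WhileF; eauto using evalE_evalGE.
Qed.

Lemma steps_Skip_evalGco {c s s'} :
  steps c s Skip s' -> evalGco c s Conv s' Conv.
Proof.
  intros Hsteps; remember Skip as k; induction Hsteps; subst.
  - constructor.
  - eapply step_evalGco; eauto.
Qed.

Lemma diverges_Skip {s} : ~ diverges Skip s.
Proof. intros Hd; inversion Hd as [? ? ? ? Hstep _]; inversion Hstep. Qed.

Lemma diverges_Alloc {x s} : ~ diverges (Alloc x) s.
Proof.
  intros Hd; inversion Hd as [? ? ? ? Hstep Hd']; inversion Hstep; subst.
  exact (diverges_Skip Hd').
Qed.

Lemma diverges_Assign {x e s} : ~ diverges (Assign x e) s.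
Proof.
  intros Hd; inversion Hd as [? ? ? ? Hstep Hd']; inversion Hstep; subst.
  exact (diverges_Skip Hd').
Qed.

Lemma diverges_If {e c1 c2 s} : diverges (If e c1 c2) s ->
  (exists v, evalE e s v /\ v <> VNat 0 /\ diverges c1 s) \/
  (evalE e s (VNat 0) /\ diverges c2 s).
Proof.
  intros Hd; inversion Hd as [? ? ? ? Hstep Hd']; inversion Hstep; subst; eauto 6.
Qed.

Lemma diverges_While {e c s} : diverges (While e c) s ->
  exists v, evalE e s v /\ v <> VNat 0 /\ diverges (Seq c (While e c)) s.
Proof.
  intros Hd; inversion Hd as [? ? ? ? Hstep Hd']; inversion Hstep; subst; eauto.
  exfalso; exact (diverges_Skip Hd').
Qed.

Definition finishes_then_diverges (c1 c2 : cmd) (s : store) : Prop :=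
  exists s1, steps c1 s Skip s1 /\ diverges c2 s1.

Lemma diverges_Seq_step {c1 c2 s} :
  diverges (Seq c1 c2) s -> ~ finishes_then_diverges c1 c2 s ->
  exists c1' s', step c1 s c1' s' /\ diverges (Seq c1' c2) s' /\
    ~ finishes_then_diverges c1' c2 s'.
Proof.
  intros Hd Hfin.
  inversion Hd as [? ? ? ? Hstep Hd'];
    inversion Hstep as [| | ? c1' ? ? ? Hstep1 | | | | |]; subst.
  - eexists c1', _; split; [exact Hstep1 | split; [exact Hd' |]].
    intros [s1 [Hsteps Hd2]]; apply Hfin; exists s1; split; [econstructor|]; eauto.
  - exfalso; apply Hfin; eexists; split; [constructor | exact Hd'].
Qed.

(* The inversion lives in [diverges_Seq_step]: inlined here, it breaks the guard condition. *)
Lemma diverges_Seq_left {c1 c2 s} :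
  diverges (Seq c1 c2) s -> ~ finishes_then_diverges c1 c2 s -> diverges c1 s.
Proof.
  revert c1 s; cofix CH; intros c1 s Hd Hfin.
  destruct (diverges_Seq_step Hd Hfin) as [c1' [s' [Hstep [Hd' Hfin']]]].
  exact (Div Hstep (CH _ _ Hd' Hfin')).
Qed.

Lemma diverges_Seq {c1 c2 s} : diverges (Seq c1 c2) s ->
  diverges c1 s \/ finishes_then_diverges c1 c2 s.
Proof.
  intros Hd; destruct (classic (finishes_then_diverges c1 c2 s)) as [Hfin | Hfin].
  - right; exact Hfin.
  - left; exact (diverges_Seq_left Hd Hfin).
Qed.

Theorem lemma26 (c : cmd) (s s' : store) :
  diverges c s -> evalGco c s Conv s' DivF.
Proof.
  revert c s s'; cofix CH; intros c s s' Hd.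
  destruct c as [| x | x e | c1 c2 | e c1 c2 | e c].
  - exfalso; exact (diverges_Skip Hd).
  - exfalso; exact (diverges_Alloc Hd).
  - exfalso; exact (diverges_Assign Hd).
  - destruct (diverges_Seq Hd) as [Hd1 | [s1 [Hsteps Hd2]]].
    + exact (G_Seq (CH _ _ s' Hd1) (G_Div _ _ _)).
    + exact (G_Seq (steps_Skip_evalGco Hsteps) (CH _ _ s' Hd2)).
  - destruct (diverges_If Hd) as [[v [Hv [Hv0 Hd1]]] | [Hv Hd2]].
    + exact (G_IfT c2 Hv0 (evalE_evalGE Hv) (CH _ _ s' Hd1)).
    + exact (G_IfF c1 (evalE_evalGE Hv) (CH _ _ s' Hd2)).
  - destruct (diverges_While Hd) as [v [Hv [Hv0 Hdseq]]].
    destruct (diverges_Seq Hdseq) as [Hd1 | [s1 [Hsteps Hd2]]].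
    + exact (G_WhileT (evalE_evalGE Hv) Hv0 (CH _ _ s' Hd1) (G_Div _ _ _)).
    + exact (G_WhileT (evalE_evalGE Hv) Hv0 (steps_Skip_evalGco Hsteps) (CH _ _ s' Hd2)).
Qed.
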